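(* Let $n\ge1$, $N=\{1,\dots,n\}$, $A=[0,1]$, and let $f$ be an OWA mechanism with weights $w_1,\dots,w_n\in[0,1]$, $\sum_j w_j=1$. Then $f$ is strategy-proof if and only if $w_j=1$ for some $j\in\{1,\dots,n\}$.
   Context: A mechanism is a map $f:A^n\to A$ from profiles $x=(x_i)_{i\in N}$ of reported locations to a facility location; agent $i$ with true location $x_i$ has utility $u(x_i,y)=1-|x_i-y|$ for facility location $y$. An OWA mechanism with weights $w_1,\dots,w_n$ returns $f(x)=\sum_{j=1}^n w_j x_{\pi(j)}$, where $\pi$ is a permutation of $N$ with $x_{\pi(1)}\le\dots\le x_{\pi(n)}$. $f$ is strategy-proof if for every $i\in N$, every $x_{-i}\in A^{n-1}$ and all $x_i,x_i'\in A$: $u(x_i,f(x_i,x_{-i}))\ge u(x_i,f(x_i',x_{-i}))$. *)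

From HB Require Import structures.
From mathcomp Require Import all_boot all_order all_algebra.
Set Implicit Arguments. Unset Strict Implicit. Unset Printing Implicit Defensive.
Import Order.TTheory GRing.Theory Num.Theory.
Local Open Scope ring_scope.

Definition in_A {R : realDomainType} (a : R) : bool := (0 <= a) && (a <= 1).

Definition profile_in_A {R : realDomainType} {n : nat} (x : 'I_n -> R) : Prop :=
  forall i, in_A (x i).

(* x_{pi(1)} <= ... <= x_{pi(n)} : the reported locations sorted increasingly
   (0-indexed: position j holds x_{pi(j+1)}). *)
Definition sorted_profile {R : realDomainType} {n : nat} (x : 'I_n -> R) : seq R :=
  sort <=%R [seq x i | i <- enum 'I_n].

Definition owa {R : realDomainType} {n : nat} (w : 'I_n -> R) (x : 'I_n -> R) : R :=
  \sum_(j < n) w j * nth 0 (sorted_profile x) j.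

Definition util {R : realDomainType} (a y : R) : R := 1 - `|a - y|.

Definition upd {R : realDomainType} {n : nat} (x : 'I_n -> R) (i : 'I_n) (a : R) :
  'I_n -> R := fun k => if k == i then a else x k.

Definition strategy_proof {R : realDomainType} {n : nat} (f : ('I_n -> R) -> R) : Prop :=
  forall (i : 'I_n) (x : 'I_n -> R) (a' : R),
    profile_in_A x -> in_A a' ->
    util (x i) (f x) >= util (x i) (f (upd x i a')).

From HB Require Import structures.
From mathcomp Require Import all_boot all_order all_algebra zify.
Set Implicit Arguments. Unset Strict Implicit. Unset Printing Implicit Defensive.
Import Order.TTheory GRing.Theory Num.Theory.
Local Open Scope ring_scope.

(* If w_j = 1 the mechanism is the j-th order statistic of the reports. When
   agent i's location lies below the j-th smallest report, no report of i can
   lower it, and when it lies above, no report of i can raise it; so i cannot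
   bring the facility closer. Conversely, let j be the first index with w_j > 0 and assume
   w_j < 1. With the agents before j at 0, agent j at 1 - w_j and the agents
   after j at 1, the facility lies at (1 - w_j) (1 + w_j); by reporting 0,
   agent j moves it to 1 - w_j, exactly onto its own location. *)

Lemma sorted_nth_count d (T : orderType d) (x0 : T) (s : seq T) (P : pred T) k :
  sorted <=%O s -> (forall a b, (a <= b)%O -> P b -> P a) -> (k < size s)%N ->
  P (nth x0 s k) = (k < count P s)%N.
Proof.
move=> s_sorted P_down ks.
have nth_le i j : (i <= j < size s)%N -> (nth x0 s i <= nth x0 s j)%O.
  move=> /andP[ij js]; have i_lt := leq_ltn_trans ij js.
  exact: (sorted_leq_nth le_trans lexx x0 s_sorted i j i_lt js ij).
case: (boolP (P _)) => Pk; apply/esym.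
- rewrite -(cat_take_drop k.+1 s) count_cat.
  suff : all P (take k.+1 s).
    by rewrite all_count size_takel // => /eqP ->; rewrite leq_addr.
  apply/(all_nthP x0) => i; rewrite size_takel // => ik.
  by rewrite nth_take //; apply: P_down Pk; apply: nth_le; rewrite -ltnS ik.
- apply/negbTE; rewrite -leqNgt -(cat_take_drop k s) count_cat.
  suff -> : count P (drop k s) = 0%N.
    by rewrite addn0 (leq_trans (count_size _ _)) // size_takel // ltnW.
  apply/eqP; rewrite -leqn0 leqNgt -has_count; apply/(has_nthP x0) => -[i].
  rewrite size_drop nth_drop => i_lt Pi; move/negP: Pk; apply; apply: P_down Pi.
  by rewrite nth_le // leq_addr -ltn_subRL.
Qed.

Section OrderStatistic.
Variables (R : realDomainType) (n : nat).
Implicit Types (x : 'I_n -> R) (P : pred R).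

Definition order_stat (j : 'I_n) x : R := nth 0 (sorted_profile x) j.

Lemma size_sorted_profile x : size (sorted_profile x) = n.
Proof. by rewrite size_sort size_map size_enum_ord. Qed.

Lemma count_sorted_profile P x :
  count P (sorted_profile x) = count (P \o x) (enum 'I_n).
Proof. by rewrite (permP (permEl (perm_sort _ _))) count_map. Qed.

Lemma order_stat_count P j x : (forall a b, a <= b -> P b -> P a) ->
  P (order_stat j x) = (j < count (P \o x) (enum 'I_n))%N.
Proof.
move=> P_down; rewrite -count_sorted_profile sorted_nth_count //.
  exact: sort_sorted le_total _.
by rewrite size_sorted_profile.
Qed.

Lemma eq_order_stat j x (x' : 'I_n -> R) :
  x =1 x' -> order_stat j x = order_stat j x'.
Proof. by move=> eq_x; rewrite /order_stat /sorted_profile (eq_map eq_x). Qed.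

Lemma order_stat_lt j x (y : R) :
  (order_stat j x < y) = (j < count (fun k => (x k < y)%R) (enum 'I_n))%N.
Proof. by apply: (order_stat_count (P := (< y))) => a b; apply: le_lt_trans. Qed.

Lemma order_stat_le j x (y : R) :
  (order_stat j x <= y) = (j < count (fun k => (x k <= y)%R) (enum 'I_n))%N.
Proof. by apply: (order_stat_count (P := (<= y))) => a b; apply: le_trans. Qed.

Lemma order_stat_upd_ge j i x a :
  x i < order_stat j x -> order_stat j x <= order_stat j (upd x i a).
Proof.
set y := order_stat j x => lt_xi; rewrite leNgt order_stat_lt; apply/negP => lt_j.
have : (j < count (fun k => (x k < y)%R) (enum 'I_n))%N.
  by apply: leq_trans lt_j _; apply: sub_count => k; rewrite /upd; case: eqP => [->|].
by rewrite -order_stat_lt ltxx.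
Qed.

Lemma order_stat_upd_le j i x a :
  order_stat j x < x i -> order_stat j (upd x i a) <= order_stat j x.
Proof.
set y := order_stat j x => gt_xi; rewrite order_stat_le.
have lt_j : (j < count (fun k => (x k <= y)%R) (enum 'I_n))%N.
  by rewrite -order_stat_le.
apply: leq_trans lt_j _; apply: sub_count => k; rewrite /upd; case: eqP => [-> le_xi|//].
by move: gt_xi; rewrite ltNge le_xi.
Qed.

Lemma order_stat_upd_dist j i x a :
  `|x i - order_stat j x| <= `|x i - order_stat j (upd x i a)|.
Proof.
case: (ltgtP (x i) (order_stat j x)) => [lt_xi|gt_xi|->]; last by rewrite subrr normr0.
- have ge := order_stat_upd_ge a lt_xi.
  rewrite !ler0_norm ?opprB ?lerD2r // subr_le0 ltW //.
  exact: lt_le_trans ge.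
- have le := order_stat_upd_le a gt_xi.
  rewrite !ger0_norm ?lerD2l ?lerN2 // subr_ge0 ltW //.
  exact: le_lt_trans gt_xi.
Qed.

Lemma strategy_proof_order_stat j : strategy_proof (order_stat j).
Proof. by move=> i x a _ _; rewrite /util lerD2l lerN2 order_stat_upd_dist. Qed.

Lemma order_stat_monotone j x :
  {homo x : a b / (a <= b)%N >-> a <= b} -> order_stat j x = x j.
Proof.
move=> x_mono; rewrite /order_stat /sorted_profile sorted_sort; last first.
- apply: (homo_sorted (e := relpre val leq)) => [a b /x_mono //|].
  by rewrite -sorted_map val_enum_ord iota_sorted.
- exact: le_trans.
by rewrite (nth_map j) ?size_enum_ord // nth_ord_enum.
Qed.

End OrderStatistic.

Section OWA.
Variables (R : realDomainType) (n : nat) (w : 'I_n -> R).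
Hypotheses (w_ge0 : forall j, 0 <= w j) (w_sum : \sum_(j < n) w j = 1).

Lemma owa_unit_weight j x : w j = 1 -> owa w x = order_stat j x.
Proof.
move=> wj1; have w_eq0 : forall k, k != j -> w k = 0.
  apply: psumr_eq0P => [k _|]; first exact: w_ge0.
  by move: w_sum; rewrite (bigD1 j) //= wj1 => /(canRL (addKr 1)); rewrite addNr.
rewrite /owa (bigD1 j) //= big1 => [|k /w_eq0 ->]; last by rewrite mul0r.
by rewrite wj1 mul1r addr0.
Qed.

Lemma owa_monotone (x : 'I_n -> R) :
  {homo x : a b / (a <= b)%N >-> a <= b} -> owa w x = \sum_(j < n) w j * x j.
Proof.
by move=> x_mono; apply: eq_bigr => j _; congr (_ * _); apply: order_stat_monotone.
Qed.

Lemma eq_owa x (x' : 'I_n -> R) : x =1 x' -> owa w x = owa w x'.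
Proof. by move=> eq_x; apply: eq_bigr => j _; congr (_ * _); apply: eq_order_stat. Qed.

Definition step_profile (j : 'I_n) (c : R) : 'I_n -> R :=
  fun k => if (k < j)%N then 0 else if k == j then c else 1.

Lemma step_profile_monotone j (c : R) : 0 <= c <= 1 ->
  {homo step_profile j c : a b / (a <= b)%N >-> a <= b}.
Proof.
case/andP=> c_ge0 c_le1 a b le_ab; rewrite /step_profile -!val_eqE /=.
case: (ltngtP a j) => a_j; case: (ltngtP b j) => b_j; rewrite ?lexx ?ler01 //; lia.
Qed.

Lemma upd_step_profile (j : 'I_n) (c a : R) :
  upd (step_profile j c) j a =1 step_profile j a.
Proof. by move=> k; rewrite /upd /step_profile; case: eqP => // ->; rewrite ltnn. Qed.

Lemma owa_step_profile (j : 'I_n) (c : R) :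
  (forall k : 'I_n, (k < j)%N -> w k = 0) -> 0 <= c <= 1 ->
  owa w (step_profile j c) = w j * c + (1 - w j).
Proof.
move=> w_below c01; have w_rest : \sum_(k | k != j) w k = 1 - w j.
  by move: w_sum; rewrite (bigD1 j) //= => <-; rewrite addrC addrK.
rewrite owa_monotone; last exact: step_profile_monotone.
rewrite (bigD1 j) //= /step_profile ltnn eqxx -w_rest; congr (_ + _).
apply: eq_bigr => k k_neq; rewrite (negbTE k_neq).
by case: ltnP => [/w_below ->|_]; rewrite ?mul0r ?mulr1.
Qed.

Lemma owa_not_strategy_proof (j : 'I_n) :
  (forall k : 'I_n, (k < j)%N -> w k = 0) -> 0 < w j < 1 -> ~ strategy_proof (owa w).
Proof.
move=> w_below /andP[wj_gt0 wj_lt1] sp.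
have c01 : 0 <= 1 - w j <= 1 by rewrite subr_ge0 ltW //= gerBl w_ge0.
have x_in_A : profile_in_A (step_profile j (1 - w j)).
  move=> k; rewrite /in_A /step_profile; case: ifP => _; first by rewrite lexx ler01.
  by case: ifP => _; rewrite ?lexx ?ler01.
have := sp j _ 0 x_in_A; rewrite (eq_owa (upd_step_profile _ _ _)).
rewrite !owa_step_profile ?lexx ?ler01 // /in_A lexx ler01 => /(_ isT).
rewrite /util /step_profile ltnn eqxx mulr0 add0r subrr normr0 subr0.
rewrite -{1}(subr0 1) lerD2l lerN2 normr_le0 [_ + (1 - _)]addrC opprD addNKr.
by rewrite oppr_eq0 mulf_eq0 subr_eq0 (gt_eqF wj_gt0) (gt_eqF wj_lt1).
Qed.

End OWA.

Lemma first_positive_weight (R : realDomainType) n (w : 'I_n -> R) :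
  (forall j, 0 <= w j) -> \sum_(j < n) w j = 1 ->
  exists2 j, 0 < w j & forall k : 'I_n, (k < j)%N -> w k = 0.
Proof.
move=> w_ge0 w_sum; case: (pickP (fun k => 0 < w k)) => [k0 wk0_gt0|w_le0].
  case: (arg_minnP (P := fun k => 0 < w k) (@nat_of_ord n) wk0_gt0) => j wj_gt0 j_min.
  exists j => // k lt_kj; apply/eqP; rewrite eq_le w_ge0 andbT leNgt.
  by apply/negP => /j_min; rewrite leqNgt lt_kj.
have /eqP : \sum_(j < n) w j = 0.
  by apply: big1 => k _; apply/eqP; rewrite eq_le w_ge0 andbT leNgt w_le0.
by rewrite w_sum oner_eq0.
Qed.

Theorem proposition2 (R : realFieldType) (n : nat) (w : 'I_n -> R) :
  (0 < n)%N ->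
  (forall j, 0 <= w j <= 1) ->
  \sum_(j < n) w j = 1 ->
  (strategy_proof (owa w) <-> exists j : 'I_n, w j = 1).
Proof.
(* [0 < n] is implied by the weights summing to 1. *)
move=> _ w01 w_sum; have w_ge0 j : 0 <= w j by case/andP: (w01 j).
split=> [sp|[j wj1] i x a xA aA]; last first.
  by rewrite !(owa_unit_weight w_ge0 w_sum _ wj1); exact: strategy_proof_order_stat.
have [j wj_gt0 w_below] := first_positive_weight w_ge0 w_sum.
exists j; apply/eqP; rewrite eq_le; case/andP: (w01 j) => _ -> /=.
rewrite leNgt; apply/negP => wj_lt1.
by apply: (owa_not_strategy_proof w_ge0 w_sum w_below _ sp); rewrite wj_gt0.
Qed.
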